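(* For any i--lattice $L$, ${\rm Con}_{\mathbb{I}}(L)=\{\theta\in{\rm Con}(L): \theta=\theta'\}=\{\theta\vee\theta' : \theta\in{\rm Con}(L)\}=\{\theta\cap\theta' : \theta\in{\rm Con}(L)\}=\{\theta\in{\rm Con}(L): (\forall x\in L)\ ((x/\theta)'=x'/\theta)\}=\{\theta\in{\rm Con}(L): (\forall\gamma\in L/\theta)\ (\gamma'\in L/\theta)\}$.
   Context: An i--lattice is a lattice $L$ with a unary operation $'$ such that $a''=a$ and $a\leq b\Rightarrow b'\leq a'$. ${\rm Con}(L)$ is the lattice of lattice congruences of $L$ (joins $\vee$ taken in ${\rm Con}(L)$); ${\rm Con}_{\mathbb{I}}(L)$ is the set of $\theta\in{\rm Con}(L)$ with $(a,b)\in\theta\Rightarrow(a',b')\in\theta$. For $\theta\subseteq L^2$, $\theta'=\{(a',b'):(a,b)\in\theta\}$; for $M\subseteq L$, $M'=\{x':x\in M\}$; $x/\theta$ is the class of $x$ and $L/\theta$ the set of classes. *)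

From HB Require Import structures.
From mathcomp Require Import all_boot all_order.
Set Implicit Arguments. Unset Strict Implicit. Unset Printing Implicit Defensive.
Import Order.TTheory.
Local Open Scope order_scope.

Section ILattice.
Context {d : Order.disp_t} {L : latticeType d}.

(* i-lattice axioms for a unary operation inv ("'") *)
Definition involutive_op (inv : L -> L) : Prop := forall a, inv (inv a) = a.
Definition antitone_op (inv : L -> L) : Prop := forall a b, a <= b -> inv b <= inv a.

Definition is_con (t : L -> L -> Prop) : Prop :=
  [/\ (forall a, t a a),
      (forall a b, t a b -> t b a),
      (forall a b c, t a b -> t b c -> t a c),
      (forall a b c e, t a b -> t c e -> t (a `&` c) (b `&` e)) &
      (forall a b c e, t a b -> t c e -> t (a `|` c) (b `|` e))].

Definition is_con_I (inv : L -> L) (t : L -> L -> Prop) : Prop :=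
  is_con t /\ (forall a b, t a b -> t (inv a) (inv b)).

Definition rel_inv (inv : L -> L) (t : L -> L -> Prop) : L -> L -> Prop :=
  fun x y => exists a b, t a b /\ x = inv a /\ y = inv b.

(* join in Con(L): the least congruence containing both (intersection of all
   congruences containing both) *)
Definition con_join (t s : L -> L -> Prop) : L -> L -> Prop :=
  fun x y => forall u, is_con u -> (forall a b, t a b -> u a b) ->
                       (forall a b, s a b -> u a b) -> u x y.

Definition rel_cap (t s : L -> L -> Prop) : L -> L -> Prop :=
  fun x y => t x y /\ s x y.

Definition cls (t : L -> L -> Prop) (x : L) : L -> Prop := fun y => t x y.

Definition set_inv (inv : L -> L) (M : L -> Prop) : L -> Prop :=
  fun y => exists x, M x /\ y = inv x.

Definition in_quot (t : L -> L -> Prop) (g : L -> Prop) : Prop :=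
  exists x, g = cls t x.

End ILattice.

(* Everything reduces to the condition θ' = θ. Since ' is an involutive
   anti-automorphism of L, it swaps meets and joins, so θ ↦ θ' is an involution
   of Con(L); it commutes with intersections and with joins in Con(L), hence
   fixes θ ∨ θ' and θ ∩ θ'. For the class conditions, (x/θ)' = x'/θ', and a
   block of θ containing x' can only be x'/θ. *)
From HB Require Import structures.
From mathcomp Require Import all_boot all_order.
From Stdlib Require Import FunctionalExtensionality PropExtensionality.
Set Implicit Arguments. Unset Strict Implicit. Unset Printing Implicit Defensive.
Import Order.TTheory.
Local Open Scope order_scope.

Lemma pred_ext (T : Type) (P Q : T -> Prop) : (forall x, P x <-> Q x) -> P = Q.
Proof.
by move=> PQ; apply: functional_extensionality => x; apply: propositional_extensionality.
Qed.

Lemma rel_ext (T : Type) (r s : T -> T -> Prop) :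
  (forall x y, r x y <-> s x y) -> r = s.
Proof. by move=> rs; apply: functional_extensionality => x; apply: pred_ext. Qed.

Section Congruences.
Context {d : Order.disp_t} {L : latticeType d}.
Implicit Types (t s : L -> L -> Prop).

Lemma is_con_rel_cap t s : is_con t -> is_con s -> is_con (rel_cap t s).
Proof.
case=> tR tS tT tI tU [sR sS sT sI sU]; split.
- by move=> a; split.
- by move=> a b [? ?]; split; auto.
- by move=> a b c [? ?] [? ?]; split; eauto.
- by move=> a b c e [? ?] [? ?]; split; auto.
- by move=> a b c e [? ?] [? ?]; split; auto.
Qed.

Lemma is_con_con_join t s : is_con (con_join t s).
Proof.
split=> [a|a b|a b c|a b c e|a b c e]; [|move=> ts|move=> ts1 ts2..] => u uC tu su;
  case: (uC) => uR uS uT uI uU.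
- exact: uR.
- exact/uS/(ts u uC tu su).
- exact: uT (ts1 u uC tu su) (ts2 u uC tu su).
- exact: uI (ts1 u uC tu su) (ts2 u uC tu su).
- exact: uU (ts1 u uC tu su) (ts2 u uC tu su).
Qed.

Lemma rel_capC t s : rel_cap t s = rel_cap s t.
Proof. by apply: rel_ext => x y; split=> -[]. Qed.

Lemma rel_capid t : rel_cap t t = t.
Proof. by apply: rel_ext => x y; split=> [[]|]. Qed.

Lemma con_joinC t s : con_join t s = con_join s t.
Proof. by apply: rel_ext => x y; split=> ts u uC tu su; apply: ts. Qed.

Lemma con_join_id t : is_con t -> con_join t t = t.
Proof. by move=> tC; apply: rel_ext => x y; split=> [|txy u _ tu _]; [apply | apply: tu]. Qed.

Lemma in_quot_cls t g y : is_con t -> in_quot t g -> g y -> g = cls t y.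
Proof.
case=> _ tS tT _ _ [x ->] txy; apply: pred_ext => z; rewrite /cls.
by split=> [/(tT _ _ _ (tS _ _ txy)) | /(tT _ _ _ txy)].
Qed.

End Congruences.

Section ILattice.
Context {d : Order.disp_t} {L : latticeType d} (inv : L -> L).
Hypothesis invK : involutive_op inv.
Hypothesis inv_anti : antitone_op inv.
Implicit Types (t s : L -> L -> Prop).

Lemma le_inv2 a b : (inv a <= inv b) = (b <= a).
Proof.
apply/idP/idP => [|/inv_anti //].
by rewrite -{2}[a]invK -{2}[b]invK => /inv_anti.
Qed.

Lemma invI a b : inv (a `&` b) = inv a `|` inv b.
Proof.
apply: le_anti; rewrite leUx !le_inv2 leIl leIr andbT.
by rewrite -le_inv2 invK lexI -[leRHS]invK le_inv2 leUl -[leRHS]invK le_inv2 leUr.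
Qed.

Lemma invU a b : inv (a `|` b) = inv a `&` inv b.
Proof. by rewrite -{1}[a]invK -{1}[b]invK -invI invK. Qed.

Lemma rel_invE t x y : rel_inv inv t x y <-> t (inv x) (inv y).
Proof.
split=> [[a [b [tab [-> ->]]]] | txy]; first by rewrite !invK.
by exists (inv x), (inv y); rewrite !invK.
Qed.

Lemma rel_invK t : rel_inv inv (rel_inv inv t) = t.
Proof. by apply: rel_ext => x y; rewrite !rel_invE !invK. Qed.

Lemma rel_inv_cap t s :
  rel_inv inv (rel_cap t s) = rel_cap (rel_inv inv t) (rel_inv inv s).
Proof. by apply: rel_ext => x y; rewrite /rel_cap !rel_invE. Qed.

Lemma is_con_rel_inv t : is_con t -> is_con (rel_inv inv t).
Proof.
case=> tR tS tT tI tU.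
by split=> [a|a b|a b c|a b c e|a b c e]; rewrite !rel_invE ?invI ?invU; eauto.
Qed.

Lemma rel_inv_sub t s :
  (forall a b, t a b -> s a b) -> forall a b, rel_inv inv t a b -> rel_inv inv s a b.
Proof. by move=> ts a b; rewrite !rel_invE; apply: ts. Qed.

Lemma rel_inv_con_join t s :
  rel_inv inv (con_join t s) = con_join (rel_inv inv t) (rel_inv inv s).
Proof.
apply: rel_ext => x y; rewrite rel_invE; split=> ts u uC tu su.
  have := ts _ (is_con_rel_inv uC); rewrite rel_invE !invK; apply.
    by rewrite -[t]rel_invK; apply: rel_inv_sub.
  by rewrite -[s]rel_invK; apply: rel_inv_sub.
by rewrite -rel_invE; apply: ts (is_con_rel_inv uC) (rel_inv_sub tu) (rel_inv_sub su).
Qed.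

Lemma is_con_I_rel_invE t : is_con_I inv t <-> is_con t /\ rel_inv inv t = t.
Proof.
split=> [[tC tinv] | [tC tE]]; split=> //.
  by apply: rel_ext => x y; rewrite rel_invE; split=> [/tinv | /tinv]; rewrite ?invK.
by move=> a b; rewrite -{1}tE rel_invE.
Qed.

Lemma is_con_I_con_join t : is_con t -> is_con_I inv (con_join t (rel_inv inv t)).
Proof.
move=> tC; apply/is_con_I_rel_invE; split; first exact: is_con_con_join.
by rewrite rel_inv_con_join rel_invK con_joinC.
Qed.

Lemma is_con_I_rel_cap t : is_con t -> is_con_I inv (rel_cap t (rel_inv inv t)).
Proof.
move=> tC; apply/is_con_I_rel_invE; split.
  exact: is_con_rel_cap tC (is_con_rel_inv tC).
by rewrite rel_inv_cap rel_invK rel_capC.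
Qed.

Lemma set_inv_cls t x : set_inv inv (cls t x) = cls (rel_inv inv t) (inv x).
Proof.
apply: pred_ext => y; rewrite /cls rel_invE invK.
by split=> [[z [txz ->]] | txy]; [rewrite invK | exists (inv y); rewrite invK].
Qed.

Lemma set_inv_cls_eqE t :
  (forall x, set_inv inv (cls t x) = cls t (inv x)) <-> rel_inv inv t = t.
Proof.
split=> [clsE | tE x]; last by rewrite set_inv_cls tE.
apply: functional_extensionality => x.
by have := clsE (inv x); rewrite set_inv_cls invK.
Qed.

Lemma in_quot_set_invE t : is_con t ->
  (forall g, in_quot t g -> in_quot t (set_inv inv g)) <->
  (forall x, set_inv inv (cls t x) = cls t (inv x)).
Proof.
move=> tC; split=> [quotI x | clsE g [x ->]]; last by exists (inv x).
apply: in_quot_cls (quotI _ (ex_intro _ x erefl)) _ => //.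
by case: tC => tR _ _ _ _; exists x; split=> //; apply: tR.
Qed.

End ILattice.

Theorem lemma4p4 (d : Order.disp_t) (L : latticeType d) (inv : L -> L)
    (Hinv : involutive_op inv) (Hanti : antitone_op inv) :
  forall t : L -> L -> Prop,
    (is_con_I inv t <-> (is_con t /\ t = rel_inv inv t)) /\
    (is_con_I inv t <-> (exists s, is_con s /\ t = con_join s (rel_inv inv s))) /\
    (is_con_I inv t <-> (exists s, is_con s /\ t = rel_cap s (rel_inv inv s))) /\
    (is_con_I inv t <-> (is_con t /\
        forall x : L, set_inv inv (cls t x) = cls t (inv x))) /\
    (is_con_I inv t <-> (is_con t /\
        forall g : L -> Prop, in_quot t g -> in_quot t (set_inv inv g))).
Proof.
move=> t; have tIE := is_con_I_rel_invE Hinv t.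
split; [|split; [|split; [|split]]].
- by rewrite tIE; split=> -[tC /esym tE].
- split=> [/tIE [tC tE] | [s [sC ->]]]; last exact: is_con_I_con_join.
  by exists t; rewrite tE con_join_id.
- split=> [/tIE [tC tE] | [s [sC ->]]]; last exact: is_con_I_rel_cap.
  by exists t; rewrite tE rel_capid.
- by rewrite tIE set_inv_cls_eqE.
- rewrite tIE -set_inv_cls_eqE //.
  by split=> -[tC]; split=> //; apply (in_quot_set_invE _ tC).
Qed.
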